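(* Let $\tilde{Q}$ be a finite connected quandle and $p:\tilde{Q}\to Q$ a covering. If $\Lambda$ is a subgroup of $\mathrm{Aut}(p)$ which acts transitively on each fiber of $p$, then $\Lambda=\mathrm{Aut}(p)$ and each fiber has cardinality $|\Lambda|$.
   Context: A quandle is a set with operation $*$ satisfying $a*a=a$; unique right division; $(a*b)*c=(a*c)*(b*c)$. $R_a(y)=y*a$; connected means the group generated by the $R_a$ acts transitively. A covering is a quandle epimorphism $p:\tilde Q\to Q$ with $p(y_1)=p(y_2)\Rightarrow R_{y_1}=R_{y_2}$; $\mathrm{Aut}(p)$ is the group of automorphisms $\lambda$ of $\tilde Q$ with $p\circ\lambda=p$. *)

From mathcomp Require Import all_boot all_fingroup.
Set Implicit Arguments. Unset Strict Implicit. Unset Printing Implicit Defensive.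
Local Open Scope group_scope.

Definition is_quandle (T : Type) (op : T -> T -> T) : Prop :=
  [/\ forall a, op a a = a,
      forall a, bijective (fun y => op y a)
    & forall a b c, op (op a b) c = op (op a c) (op b c)].

Definition right_transl (T : finType) (op : T -> T -> T) : {set {perm T}} :=
  [set g : {perm T} | [exists a, [forall y, g y == op y a]]].

Definition Inn (T : finType) (op : T -> T -> T) : {group {perm T}} :=
  <<right_transl op>>%G.

Definition connected_quandle (T : finType) (op : T -> T -> T) : Prop :=
  [transitive Inn op, on [set: T] | 'P].

Definition is_covering (T Q : Type) (opT : T -> T -> T) (opQ : Q -> Q -> Q)
  (p : T -> Q) : Prop :=
  [/\ forall x y, p (opT x y) = opQ (p x) (p y),
      forall q, exists x, p x = q
    & forall y1 y2, p y1 = p y2 -> forall z, opT z y1 = opT z y2].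

Definition Autp (T : finType) (Q : eqType) (opT : T -> T -> T) (p : T -> Q)
  : {set {perm T}} :=
  [set l : {perm T} | [forall x, forall y, l (opT x y) == opT (l x) (l y)]
                      && [forall x, p (l x) == p x]].

Definition fiber (T : finType) (Q : eqType) (p : T -> Q) (q : Q) : {set T} :=
  [set x | p x == q].

From mathcomp Require Import all_boot all_fingroup.
Set Implicit Arguments. Unset Strict Implicit. Unset Printing Implicit Defensive.
Local Open Scope group_scope.

(* Since [R_y] only depends on [p y], a [p]-preserving automorphism [l]
   satisfies [l R_a = R_{l a} l = R_a l], so [Aut(p)] centralises [Inn].
   By connectedness an element of [Aut(p)] is then determined by the image of
   one point, so [Aut(p)] acts semiregularly; a subgroup already transitive on
   each fiber must therefore be all of [Aut(p)], and it acts regularly on each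
   fiber. *)

Section CoveringAutomorphisms.

Variables (T Q : finType) (opT : T -> T -> T) (opQ : Q -> Q -> Q) (p : T -> Q).

Lemma Autp_fiber l : l \in Autp opT p -> forall x, p (l x) = p x.
Proof. by case/setIdP=> _ /forallP fl x; apply/eqP/fl. Qed.

Lemma Autp_cent_Inn l :
  (forall y1 y2, p y1 = p y2 -> forall z, opT z y1 = opT z y2) ->
  l \in Autp opT p -> Inn opT \subset 'C[l].
Proof.
move=> Rp lA; rewrite gen_subG; apply/subsetP=> r.
rewrite inE => /existsP[a /forallP ra]; apply/cent1P/permP=> z.
have /setIdP[/forallP l_op _] := lA.
rewrite !permM (eqP (ra z)) (eqP (ra (l z))).
by rewrite (eqP (forallP (l_op z) a)); apply: Rp; rewrite Autp_fiber.
Qed.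

Hypotheses (conn : connected_quandle opT) (cov : is_covering opT opQ p).

Lemma Autp_eq_at l m x0 :
  l \in Autp opT p -> m \in Autp opT p -> l x0 = m x0 -> l = m.
Proof.
case: cov => _ _ Rp lA mA lm; apply/permP=> y.
have /orbitP[g gI <-] : y \in orbit 'P (Inn opT) x0 by rewrite (atransP conn).
have /cent1P/permP gl := subsetP (Autp_cent_Inn Rp lA) g gI.
have /cent1P/permP gm := subsetP (Autp_cent_Inn Rp mA) g gI.
by move: (gl x0) (gm x0); rewrite /= !permM lm => <- <-.
Qed.

Variable Lambda : {group {perm T}}.
Hypotheses (sLA : Lambda \subset Autp opT p)
  (trL : forall x y : T, p x = p y -> exists2 l, l \in Lambda & l x = y).

Lemma transitive_Autp_eq : Lambda :=: Autp opT p.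
Proof.
apply/eqP; rewrite eqEsubset sLA; apply/subsetP=> l lA.
have [x0 _ | T0] := pickP T.
  have [m mL mx0] := @trL x0 (l x0) (esym (Autp_fiber lA x0)).
  by rewrite (Autp_eq_at lA (subsetP sLA m mL) (esym mx0)).
by have -> : l = 1 by apply/permP=> x; have := T0 x.
Qed.

Lemma fiber_orbit x : fiber p (p x) = [set (l : {perm T}) x | l in Lambda].
Proof.
apply/setP=> y; rewrite inE; apply/eqP/imsetP => [pyx | [l lL ->]].
  by have [l lL <-] := @trL x y (esym pyx); exists l.
by rewrite Autp_fiber ?(subsetP sLA).
Qed.

Lemma card_fiber x : #|fiber p (p x)| = #|Lambda|.
Proof.
rewrite fiber_orbit card_in_imset // => l m lL mL.
exact: Autp_eq_at (subsetP sLA l lL) (subsetP sLA m mL).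
Qed.

End CoveringAutomorphisms.

Theorem mainTheorem13 (T Q : finType) (opT : T -> T -> T) (opQ : Q -> Q -> Q)
  (p : T -> Q) (Lambda : {group {perm T}}) :
  is_quandle opT -> is_quandle opQ -> connected_quandle opT ->
  is_covering opT opQ p ->
  Lambda \subset Autp opT p ->
  (forall x y : T, p x = p y -> exists2 l, l \in Lambda & l x = y) ->
  (Lambda :=: Autp opT p) /\ (forall q : Q, #|fiber p q| = #|Lambda|).
Proof.
move=> _ _ conn cov sLA trL; split; first exact (transitive_Autp_eq conn cov sLA trL).
move=> q; have [_ surj _] := cov; have [x <-] := surj q.
exact (card_fiber conn cov sLA trL x).
Qed.
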